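(* Assume $d\ge1$. For $0\le i\le d-2$, $$a^*_i+a^*_{i+1}=d-\frac{r-s}{2}+\frac{(r-s)(r+s)(2d+r+s+2)}{2(2d-2i+r+s-2)(2d-2i+r+s+2)},$$ and $$a^*_{d-1}+a^*_d=d+\frac{(d-1)(r-s)}{r+s+4}.$$
   Context: Fix an integer $d\ge0$ and $r,s\in(-1,\infty)$. Write $(x)_i=x(x+1)\cdots(x+i-1)$, $(x)_0=1$. For $0\le i\le d$ put $\theta^*_i=i$. Put $b^*_i=\frac{(d-i)(i-d-s)(2d-2i+r+s+2)_i}{(2d-2i+r+s)_{i+1}}$ ($0\le i\le d-1$), $c^*_i=\frac{i(i-d-r-1)(d-i+r+s+1)_{d-i}}{(d-i+r+s+2)_{d-i+1}}$ ($1\le i\le d$), $b^*_d=c^*_0=0$, and $a^*_i=\theta^*_0-b^*_i-c^*_i$ for $0\le i\le d$. *)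

From HB Require Import structures.
From mathcomp Require Import all_boot all_order all_algebra.
Set Implicit Arguments. Unset Strict Implicit. Unset Printing Implicit Defensive.
Import Order.TTheory GRing.Theory Num.Theory.
Local Open Scope ring_scope.

Definition poch {R : ringType} (x : R) (i : nat) : R :=
  \prod_(k < i) (x + k%:R).

Definition thetastar {R : ringType} (i : nat) : R := i%:R.

(* b*_i for 0 <= i <= d-1, and b*_d = 0 (values for i > d are irrelevant, set to 0). *)
Definition bstar {R : fieldType} (d : nat) (r s : R) (i : nat) : R :=
  if (i < d)%N then
    (d%:R - i%:R) * (i%:R - d%:R - s) * poch (2 * d%:R - 2 * i%:R + r + s + 2) i
    / poch (2 * d%:R - 2 * i%:R + r + s) i.+1
  else 0.

Definition cstar {R : fieldType} (d : nat) (r s : R) (i : nat) : R :=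
  if i == 0%N then 0 else
    i%:R * (i%:R - d%:R - r - 1) * poch (d%:R - i%:R + r + s + 1) (d - i)
    / poch (d%:R - i%:R + r + s + 2) (d - i).+1.

Definition astar {R : fieldType} (d : nat) (r s : R) (i : nat) : R :=
  thetastar 0 - bstar d r s i - cstar d r s i.

(* Both Pochhammer quotients telescope, since the arguments on top and bottom
   differ by two in b*_i and by one in c*_i: for i < d,
     b*_i = (d-i)(i-d-s)(2d-i+r+s+1) / ((2d-2i+r+s)(2d-2i+r+s+1)),
     c*_i = i(i-d-r-1)(d-i+r+s+1) / ((2d-2i+r+s+1)(2d-2i+r+s+2)),
   and both identities become equalities of rational functions whose
   denominators are positive because r + s > -2.  The closed form of c*_i
   fails at i = d when r + s = -1, so c*_d is computed separately. *)
From HB Require Import structures.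
From mathcomp Require Import all_boot all_order all_algebra.
From mathcomp Require Import ring lra.
Import Order.TTheory GRing.Theory Num.Theory.
Local Open Scope ring_scope.

Lemma pochSl (R : nzRingType) (x : R) n : poch x n.+1 = x * poch (x + 1) n.
Proof.
rewrite /poch big_ord_recl addr0; congr (_ * _).
by apply: eq_bigr => k _; rewrite lift0 /= mulrS addrA.
Qed.

Lemma pochSr (R : nzRingType) (x : R) n : poch x n.+1 = poch x n * (x + n%:R).
Proof. by rewrite /poch big_ord_recr. Qed.

Lemma poch_gt0 (R : numDomainType) (x : R) n : 0 < x -> 0 < poch x n.
Proof.
move=> x_gt0; apply: prodr_gt0 => k _.
by apply: ltr_wpDr; rewrite ?ler0n.
Qed.

Lemma pochSSl (R : nzRingType) (x : R) n :
  poch x n.+2 = x * (x + 1) * poch (x + 2) n.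
Proof. by rewrite pochSl pochSl -addrA mulrA. Qed.

Lemma pochSSr (R : nzRingType) (x : R) n :
  poch x n.+2 = poch x n * (x + n%:R) * (x + n%:R + 1).
Proof. by rewrite pochSr pochSr -natr1 addrA. Qed.

Lemma poch_ratio_shift2 (R : numFieldType) (x : R) n : 0 < x ->
  poch (x + 2) n / poch x n.+1 = (x + n%:R + 1) / (x * (x + 1)).
Proof.
move=> x_gt0; have x1_gt0 : 0 < x + 1 by rewrite ltr_wpDr.
apply/eqP; rewrite eqr_div ?lt0r_neq0 ?mulr_gt0 ?poch_gt0 //; apply/eqP.
by rewrite mulrC -pochSSl pochSr [RHS]mulrC -natr1 addrA.
Qed.

Lemma poch_ratio_shift1 (R : numFieldType) (y : R) m : 0 < y ->
  poch y m / poch (y + 1) m.+1 = y / ((y + m%:R) * (y + m%:R + 1)).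
Proof.
move=> y_gt0; have ym_gt0 : 0 < y + m%:R by rewrite ltr_wpDr ?ler0n.
have ym1_gt0 : 0 < y + m%:R + 1 by rewrite ltr_wpDr.
apply/eqP; rewrite eqr_div ?lt0r_neq0 ?mulr_gt0 ?poch_gt0 ?ltr_wpDr //; apply/eqP.
by rewrite mulrA -pochSSr pochSl.
Qed.

Section ClosedForms.

Variables (R : realFieldType) (d : nat) (r s : R).

Lemma bstar_closed i : -2 < r + s -> (i < d)%N ->
  bstar d r s i = (d%:R - i%:R) * (i%:R - d%:R - s) * (2 * d%:R - i%:R + r + s + 1)
    / ((2 * d%:R - 2 * i%:R + r + s) * (2 * d%:R - 2 * i%:R + r + s + 1)).
Proof.
move=> rs_gt lt_id; rewrite /bstar lt_id -mulrA poch_ratio_shift2.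
  by rewrite mulrA; congr (_ * _ / _); ring.
have le_i1d : i%:R + 1 <= d%:R :> R by rewrite natr1 ler_nat.
lra.
Qed.

Lemma bstar_last : bstar d r s d = 0.
Proof. by rewrite /bstar ltnn. Qed.

Lemma cstar_closed i : -2 < r + s -> (i < d)%N ->
  cstar d r s i = i%:R * (i%:R - d%:R - r - 1) * (d%:R - i%:R + r + s + 1)
    / ((2 * d%:R - 2 * i%:R + r + s + 1) * (2 * d%:R - 2 * i%:R + r + s + 2)).
Proof.
move=> rs_gt lt_id; rewrite /cstar; case: eqP => [->|_]; first by rewrite !mul0r.
have -> : d%:R - i%:R + r + s + 2 = d%:R - i%:R + r + s + 1 + 1 by ring.
rewrite -mulrA poch_ratio_shift1; last first.
  have le_i1d : i%:R + 1 <= d%:R :> R by rewrite natr1 ler_nat.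
  lra.
rewrite natrB 1?ltnW // mulrA; congr (_ * _ / (_ * _)); ring.
Qed.

Lemma cstar_last : (0 < d)%N -> cstar d r s d = d%:R * (- r - 1) / (r + s + 2).
Proof.
case: d => // n _; rewrite /cstar subnn /poch big_ord0 big_ord1 /=.
by rewrite !subrr sub0r !addr0 !add0r mulr1.
Qed.

End ClosedForms.

Theorem lemma2p6 (R : realFieldType) (d : nat) (r s : R) :
  (1 <= d)%N -> -1 < r -> -1 < s ->
  (forall i : nat, (i.+2 <= d)%N ->
     astar d r s i + astar d r s i.+1 =
       d%:R - (r - s) / 2
       + (r - s) * (r + s) * (2 * d%:R + r + s + 2)
         / (2 * (2 * d%:R - 2 * i%:R + r + s - 2) * (2 * d%:R - 2 * i%:R + r + s + 2)))
  /\
  astar d r s d.-1 + astar d r s d =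
    d%:R + (d.-1)%:R * (r - s) / (r + s + 4).
Proof.
move=> d_gt0 r_gt s_gt; have rs_gt : -2 < r + s by lra.
rewrite /astar /thetastar; split => [i lt_i2d|].
  have le_i2d : i%:R + 2 <= d%:R :> R by rewrite -[2]/(2%:R) -natrD ler_nat addn2.
  have lt_id : (i < d)%N by apply: ltnW.
  rewrite !bstar_closed ?cstar_closed // -natr1.
  field; rewrite -?andbA; repeat (apply/andP; split); lra.
case: d d_gt0 => // n _ /=.
rewrite bstar_last cstar_last // bstar_closed ?cstar_closed // -natr1.
have n_ge0 := ler0n R n.
field; rewrite -?andbA; repeat (apply/andP; split); lra.
Qed.
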